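(* Let $n=p_1^{\alpha_1}p_2^{\alpha_2}\cdots p_r^{\alpha_r}$, where $r\geq 2$, $\alpha_1,\ldots,\alpha_r$ are positive integers and $p_1<p_2<\cdots<p_r$ are primes. Suppose that at least one of the following holds: (i) $p_1\geq r+1$ and $p_r>r\,p_{r-1}$; (ii) $p_{i+1}>r\,p_i$ for each $i\in\{1,2,\ldots,r-1\}$. Then $\delta(\mathcal{P}(C_n))=\deg(p_r^{\alpha_r})$.
   Context: For a finite group $G$, the power graph $\mathcal{P}(G)$ is the simple undirected graph with vertex set $G$ in which two distinct vertices are adjacent if one is an integral power of the other. $C_n$ denotes the cyclic group of order $n$, identified with $\mathbb{Z}_n=\{0,1,\ldots,n-1\}$, so a positive divisor $d<n$ of $n$ is regarded as the element $d\in\mathbb{Z}_n$. $\deg(a)$ is the degree of vertex $a$ in $\mathcal{P}(C_n)$ and $\delta$ denotes minimum degree. *)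

From mathcomp Require Import all_boot.
Set Implicit Arguments. Unset Strict Implicit. Unset Printing Implicit Defensive.

(* C_n is identified with Z_n = {0,...,n-1} (additive), so the integral
   powers of a are the multiples k*a mod n; it suffices to take k in 'I_n. *)
Definition is_power (n a b : nat) : bool := [exists k : 'I_n, (k * a) %% n == b].

Definition pg_adj (n a b : nat) : bool :=
  (a != b) && (is_power n a b || is_power n b a).

Definition pg_deg (n a : nat) : nat := #|[set b : 'I_n | pg_adj n a b]|.

(* minimum degree of P(C_n); all degrees are < n, so n is a neutral default
   (for n >= 1) *)
Definition pg_min_deg (n : nat) : nat := \big[minn/n]_(a < n) pg_deg n a.

From mathcomp Require Import all_boot zify.
Set Implicit Arguments. Unset Strict Implicit. Unset Printing Implicit Defensive.

(* In P(C_n) two elements are adjacent iff the subgroups they generate are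
   nested, i.e. iff gcd(a, n) and gcd(b, n) are comparable for divisibility;
   so deg(a) + 1 counts the b < n whose gcd with n is comparable with
   gcd(a, n).  Write n = m q with q = p_r^alpha_r.  If gcd(a, n) is a power of
   p_r, every neighbour of q is a neighbour of a.  Otherwise some prime s | m
   divides gcd(a, n), and a is adjacent to the phi(n) generators and the
   phi(n/s) elements of order n/s; on the other side a neighbour of q is a
   multiple of q or coprime to m, whence deg(q) + 1 <= m + q phi(m) - phi(m).
   The estimates m <= r phi(m) (from p_i > i) and r s < p_r close the gap.
   Only r p_(r-1) < p_r is used, and it follows from either hypothesis. *)

Lemma card_set_ord_count n (P : pred nat) :
  #|[set b : 'I_n | P b]| = count P (iota 0 n).
Proof. by rewrite cardsE cardE /enum_mem size_filter -val_enum_ord count_map enumT. Qed.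

Lemma count_iota_inj k n (Q P : pred nat) (f : nat -> nat) : injective f ->
  (forall c, c < k -> Q c -> (f c < n) && P (f c)) ->
  count Q (iota 0 k) <= count P (iota 0 n).
Proof.
move=> f_inj fQP; rewrite -!size_filter -(size_map f).
apply: uniq_leq_size; first by rewrite map_inj_uniq ?filter_uniq ?iota_uniq.
move=> y /mapP[c]; rewrite mem_filter mem_iota add0n => /andP[Qc ck] ->.
by case/andP: (fQP c ck Qc) => fcn Pfc; rewrite mem_filter mem_iota Pfc fcn.
Qed.

Lemma count_iota_modn k m (P : pred nat) :
  count (fun b => P (b %% m)) (iota 0 (k * m)) = k * count P (iota 0 m).
Proof.
elim: k => [|k IHk]; first by rewrite mul0n.
rewrite mulSnr iotaD count_cat IHk add0n -[k * m]addn0 iotaDl count_map mulSnr.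
congr (_ + _); apply: eq_in_count => c; rewrite mem_iota add0n => cm /=.
by rewrite modnMDl modn_small.
Qed.

Lemma count_mem_iota x n : x < n -> count (pred1 x) (iota 0 n) = 1.
Proof.
move=> xn; have := count_uniq_mem x (iota_uniq 0 n); rewrite mem_iota add0n xn leq0n /= => <-.
by apply: eq_count => y; rewrite /= eq_sym.
Qed.

Lemma totient_count_iota n : totient n = count (coprime n) (iota 0 n).
Proof.
rewrite totient_count_coprime -sum1_count [RHS]big_mkcond /=.
by rewrite /index_iota subn0; apply: eq_bigr => i _; case: coprime.
Qed.

Lemma count_coprime_iota_mul k m :
  count (coprime^~ m) (iota 0 (k * m)) = k * totient m.
Proof.
rewrite totient_count_iota -count_iota_modn; apply: eq_in_count => b _ /=.
by rewrite coprime_modr coprime_sym.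
Qed.

Lemma count_dvdn_iota_mul k m : 0 < m -> count (dvdn m) (iota 0 (k * m)) = k.
Proof.
move=> m_gt0; rewrite -[RHS]muln1 -(count_mem_iota m_gt0) -count_iota_modn.
by apply: eq_count => b; rewrite /= /dvdn.
Qed.

Lemma totient_mul_leq a b : totient (a * b) <= a * totient b.
Proof.
rewrite -count_coprime_iota_mul totient_count_iota; apply: sub_count => c /=.
by rewrite coprimeMl => /andP[_]; rewrite coprime_sym.
Qed.

Definition gcd_comparable (n g : nat) : pred nat :=
  fun b => (g %| gcdn b n) || (gcdn b n %| g).

Lemma is_power_gcd n a b : 0 < n -> b < n -> is_power n a b = (gcdn a n %| b).
Proof.
move=> n_gt0 bn; apply/existsP/idP => [[k /eqP <-]|].
  by rewrite /dvdn (modn_dvdm _ (dvdn_gcdr a n)) -/(dvdn _ _) dvdn_mull ?dvdn_gcdl.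
have [-> | a_gt0] := posnP a.
  rewrite gcd0n /dvdn modn_small // => /eqP ->.
  by exists (Ordinal n_gt0); rewrite mul0n mod0n.
(* from u a = v n + gcd(a, n), the multiplier u (b / gcd(a, n)) sends a to b *)
case: (egcdnP n a_gt0) => u v Bezout _ dvd_b.
exists (Ordinal (ltn_pmod (u * (b %/ gcdn a n)) n_gt0)) => /=.
rewrite modnMml -mulnA [(_ %/ _) * a]mulnC mulnA Bezout mulnDl -mulnA.
by rewrite [gcdn a n * _]mulnC divnK // -modnDml mulnCA modnMr add0n modn_small.
Qed.

Lemma pg_adjE n a b : 0 < n -> a < n -> b < n ->
  pg_adj n a b = (a != b) && gcd_comparable n (gcdn a n) b.
Proof.
move=> n_gt0 an bn; rewrite /pg_adj !is_power_gcd // /gcd_comparable.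
by rewrite !dvdn_gcd !dvdn_gcdr !andbT.
Qed.

Lemma pg_deg_count n a : 0 < n -> a < n ->
  (pg_deg n a).+1 = count (gcd_comparable n (gcdn a n)) (iota 0 n).
Proof.
move=> n_gt0 an; rewrite /pg_deg card_set_ord_count -addn1 -(count_mem_iota an).
rewrite -count_predUI (@eq_count _ (predI _ _) pred0) ?count_pred0 ?addn0.
  apply: eq_in_count => b; rewrite mem_iota add0n => bn /=.
  rewrite pg_adjE //; have [<-|] := eqVneq a b; last by rewrite orbF.
  by rewrite /gcd_comparable dvdnn.
by move=> b /=; rewrite /pg_adj; have [->|] := eqVneq b a; rewrite ?eqxx ?andbF.
Qed.

Lemma bigmin_leq (I : eqType) (s : seq I) x0 (F : I -> nat) i :
  i \in s -> \big[minn/x0]_(j <- s) F j <= F i.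
Proof.
elim: s => // j s IHs; rewrite inE big_cons => /predU1P[->|/IHs]; first exact: geq_minl.
by rewrite geq_min => ->; rewrite orbT.
Qed.

Lemma pg_min_degE n a : a < n -> (forall b, b < n -> pg_deg n a <= pg_deg n b) ->
  pg_min_deg n = pg_deg n a.
Proof.
move=> an a_min; apply/eqP; rewrite eqn_leq; apply/andP; split.
  exact: (bigmin_leq n _ (mem_index_enum (Ordinal an))).
apply: (big_ind (leq (pg_deg n a))) => [|x y|b _]; last exact: a_min.
- by rewrite /pg_deg (leq_trans (max_card _)) ?card_ord.
- by rewrite leq_min => -> ->.
Qed.

Lemma gcd_comparable_pfactor n g P k b : prime P -> g %| P ^ k ->
  gcd_comparable n (P ^ k) b -> gcd_comparable n g b.
Proof.
rewrite /gcd_comparable => P_prime g_dvd.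
case/orP=> [/(dvdn_trans g_dvd) -> // | /(dvdn_pfactor _ _ P_prime)[j _ ->]].
case: (dvdn_pfactor _ _ P_prime g_dvd) => i _ ->.
by rewrite !dvdn_Pexp2l ?prime_gt1 // leq_total.
Qed.

Lemma count_gcd_comparable_geq n g s : prime s -> s %| g -> g %| n ->
  totient n + totient (n %/ s) <= count (gcd_comparable n g) (iota 0 n).
Proof.
move=> s_prime s_dvd_g g_dvd_n; have s_gt0 := prime_gt0 s_prime.
have n_eq : n = s * (n %/ s) by rewrite mulnC divnK // (dvdn_trans s_dvd_g).
have gcd_s_mul c : coprime (n %/ s) c -> gcdn (s * c) n = s.
  by move=> /eqP cop; rewrite {1}n_eq -muln_gcdr gcdnC cop muln1.
have count_gcd_s : totient (n %/ s) <= count (fun b => gcdn b n == s) (iota 0 n).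
  rewrite totient_count_iota; apply: (count_iota_inj (f := muln s)).
    by move=> x y /eqP; rewrite eqn_pmul2l // => /eqP.
  by move=> c c_lt cop; rewrite gcd_s_mul // eqxx andbT {1}n_eq ltn_pmul2l.
rewrite totient_count_iota.
apply: leq_trans (leq_add (leqnn _) count_gcd_s) _.
rewrite -count_predUI (@eq_count _ (predI _ _) pred0) ?count_pred0 ?addn0.
  apply: sub_count => b /orP[|/eqP gcd_s]; rewrite /gcd_comparable.
    by rewrite coprime_sym /coprime => /eqP ->; rewrite dvd1n orbT.
  by rewrite gcd_s s_dvd_g orbT.
move=> b /=; rewrite /coprime gcdnC; case: eqP => //= ->.
by apply/negbTE; rewrite eq_sym neq_ltn prime_gt1 ?orbT.
Qed.

Lemma count_gcd_comparable_leq n m q : 0 < q -> coprime m q -> n = m * q ->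
  count (gcd_comparable n q) (iota 0 n) + totient m <= m + q * totient m.
Proof.
move=> q_gt0 cop_mq n_eq; have m_dvd_n : m %| n by rewrite n_eq dvdn_mulr.
have sub_union : subpred (gcd_comparable n q) (predU (dvdn q) (coprime^~ m)).
  move=> b /orP[q_dvd | dvd_q]; apply/orP; [left | right].
    exact: dvdn_trans q_dvd (dvdn_gcdl b n).
  rewrite /coprime -dvdn1 -(eqP cop_mq) dvdn_gcd dvdn_gcdr /=.
  by rewrite (dvdn_trans _ dvd_q) // dvdn_gcd dvdn_gcdl (dvdn_trans (dvdn_gcdr b m)).
have count_inter : totient m <= count (predI (dvdn q) (coprime^~ m)) (iota 0 n).
  rewrite totient_count_iota; apply: (count_iota_inj (f := muln^~ q)).
    by move=> x y /eqP; rewrite eqn_pmul2r // => /eqP.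
  move=> c c_lt cop; rewrite n_eq ltn_pmul2r // c_lt /= dvdn_mull //=.
  by rewrite coprimeMl coprime_sym cop coprime_sym.
have count_dvd : count (dvdn q) (iota 0 n) = m by rewrite n_eq count_dvdn_iota_mul.
have count_cop : count (coprime^~ m) (iota 0 n) = q * totient m.
  by rewrite n_eq mulnC count_coprime_iota_mul.
apply: leq_trans (leq_add (sub_count sub_union _) count_inter) _.
by rewrite count_predUI count_dvd count_cop.
Qed.

Lemma totient_add_totient_divn_geq n m P k r s :
  prime P -> 0 < k -> coprime m (P ^ k) -> n = m * P ^ k -> 0 < m ->
  m <= r * totient m -> prime s -> s %| m -> r * s < P ->
  m + P ^ k * totient m <= totient n + totient (n %/ s) + totient m.
Proof.
move=> P_prime k_gt0 cop_mq n_eq m_gt0 m_le s_prime s_dvd_m rs_lt.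
have r_gt0 : 0 < r by case: r m_le {rs_lt} => //; rewrite mul0n leqNgt m_gt0.
have ms_dvd_m : m %/ s %| m by rewrite -{2}(divnK s_dvd_m) dvdn_mulr.
have totient_n : totient n = totient m * totient (P ^ k) by rewrite n_eq totient_coprime.
have totient_ns : totient (n %/ s) = totient (m %/ s) * totient (P ^ k).
  by rewrite n_eq -divn_mulAC // totient_coprime // (coprime_dvdl ms_dvd_m).
have totient_m : totient m <= s * totient (m %/ s).
  by rewrite -{1}(divnK s_dvd_m) mulnC totient_mul_leq.
have q_eq : P ^ k = P.-1.+1 * P ^ k.-1 by rewrite prednK ?prime_gt0 // -expnS prednK.
have totient_q : totient (P ^ k) = P.-1 * P ^ k.-1 by rewrite totient_pfactor.
have t_gt0 : 0 < P ^ k.-1 by rewrite expn_gt0 prime_gt0.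
have rs_le : r * s <= P.-1 by rewrite -ltnS prednK ?prime_gt0.
rewrite totient_n totient_ns totient_q q_eq.
move: (totient m) (totient (m %/ s)) (P ^ k.-1) (P.-1) => A B t u in m_le totient_m t_gt0 rs_le *.
have rA : r * A <= u * B.
  by apply: leq_trans (leq_mul (leqnn r) totient_m) _; rewrite mulnA leq_mul2r rs_le orbT.
(* (r - 1) (t - 1) A >= 0 *)
have rtA : r * A + t * A <= r * t * A + A.
  by case: r r_gt0 {m_le rA rs_le rs_lt} => // r _; case: t t_gt0 => // t _; nia.
nia.
Qed.

Lemma pg_deg_pfactor_min n m P k r a :
  prime P -> 0 < k -> 1 < m -> coprime m (P ^ k) -> n = m * P ^ k ->
  m <= r * totient m -> (forall s, prime s -> s %| m -> r * s < P) ->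
  a < n -> pg_deg n (P ^ k) <= pg_deg n a.
Proof.
move=> P_prime k_gt0 m_gt1 cop_mq n_eq m_le primes_m an.
have q_gt0 : 0 < P ^ k by rewrite expn_gt0 prime_gt0.
have m_gt0 := ltnW m_gt1.
have q_lt_n : P ^ k < n by rewrite n_eq ltn_Pmull.
have n_gt0 := leq_ltn_trans (leq0n _) q_lt_n.
have gcd_q : gcdn (P ^ k) n = P ^ k by apply/gcdn_idPl; rewrite n_eq dvdn_mull.
rewrite -ltnS !pg_deg_count // gcd_q.
set g := gcdn a n; have g_dvd_n : g %| n := dvdn_gcdr a n.
have [cop_gm | not_cop_gm] := boolP (coprime g m).
  have g_dvd_q : g %| P ^ k by rewrite -(Gauss_dvdr _ cop_gm) -n_eq.
  by apply: sub_count => b; apply: gcd_comparable_pfactor.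
have gcd_gt1 : 1 < gcdn g m.
  by move: not_cop_gm; rewrite /coprime ltn_neqAle eq_sym => ->; rewrite gcdn_gt0 m_gt0 orbT.
have s_prime := pdiv_prime gcd_gt1.
have s_dvd_g := dvdn_trans (pdiv_dvd _) (dvdn_gcdl g m).
have s_dvd_m := dvdn_trans (pdiv_dvd _) (dvdn_gcdr g m).
have := count_gcd_comparable_geq s_prime s_dvd_g g_dvd_n.
have := count_gcd_comparable_leq q_gt0 cop_mq n_eq.
have := totient_add_totient_divn_geq P_prime k_gt0 cop_mq n_eq m_gt0 m_le s_prime s_dvd_m.
rewrite primes_m //; lia.
Qed.

Lemma totient_mul_pfactor_geq M P a k : prime P -> k < P -> coprime M (P ^ a) ->
  M <= k * totient M -> M * P ^ a <= k.+1 * totient (M * P ^ a).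
Proof.
move=> P_prime k_lt cop M_le; rewrite totient_coprime //.
have [-> | a_gt0] := posnP a.
  by rewrite expn0 muln1 [totient 1]/= muln1 (leq_trans M_le) // leq_mul2r leqnSn orbT.
rewrite totient_pfactor // -(prednK a_gt0) expnS.
move: (P ^ a.-1) => t; case: P P_prime k_lt {cop} => // u _ /=; rewrite ltnS => k_le.
have ku : k * u.+1 <= k.+1 * u by rewrite mulnS mulSn leq_add2r.
apply: leq_trans (_ : k * totient M * (u.+1 * t) <= _); first by rewrite leq_mul2r M_le orbT.
have := leq_mul ku (leqnn (totient M * t)); nia.
Qed.

Section IncreasingPrimes.

Variables (p alpha : nat -> nat) (r : nat).
Hypothesis p_prime : forall i, 1 <= i <= r -> prime (p i).
Hypothesis p_incr : forall i, 1 <= i < r -> p i < p i.+1.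

Definition pprod k := \prod_(1 <= i < k) p i ^ alpha i.

Lemma p_ltn i j : 1 <= i -> i < j <= r -> p i < p j.
Proof.
move=> i_ge1; elim: j => // j IHj /andP[ij j_lt].
have p_j_lt : p j < p j.+1 by apply: p_incr; rewrite j_lt (leq_trans i_ge1) // -ltnS.
have [-> // | ij'] := eqVneq i j.
by apply: ltn_trans p_j_lt; rewrite IHj // ltn_neqAle ij' -ltnS ij ltnW.
Qed.

Lemma p_leq_pred i : 1 <= i < r -> p i <= p r.-1.
Proof.
case/andP=> i_ge1 i_lt; have [-> // | i_neq] := eqVneq i r.-1.
by apply/ltnW/(p_ltn i_ge1); rewrite ltn_neqAle i_neq -ltnS prednK ?i_lt ?leq_pred //; case: r i_lt.
Qed.

Lemma index_ltn_p j : 1 <= j <= r -> j < p j.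
Proof.
elim: j => // j IHj /andP[_ j_lt]; case: j IHj j_lt => [|j] IHj j_lt.
  by apply: prime_gt1; apply: p_prime.
exact: leq_ltn_trans (IHj (ltnW j_lt)) (p_incr (i := j.+1) j_lt).
Qed.

Lemma coprime_pprod k : k <= r -> coprime (pprod k) (p k ^ alpha k).
Proof.
move=> k_le; rewrite /pprod big_nat_cond.
apply: (big_ind (coprime^~ _)) => [|x y|i /andP[/andP[i_ge1 ik] _]].
- exact: coprime1n.
- by rewrite coprimeMl => -> ->.
have k_gt0 : 0 < k by case: k ik k_le.
have i_prime : prime (p i) by rewrite p_prime // i_ge1 (leq_trans (ltnW ik)).
have k_prime : prime (p k) by rewrite p_prime // k_gt0.
apply/coprimeXl/coprimeXr; rewrite prime_coprime // dvdn_prime2 //.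
by rewrite neq_ltn p_ltn ?ik.
Qed.

Lemma prime_dvd_pprod k s : k <= r -> prime s -> s %| pprod k ->
  exists2 i, 1 <= i < k & s = p i.
Proof.
move=> k_le s_prime; rewrite /pprod big_nat_cond.
apply: (big_ind (fun x => s %| x -> exists2 i, 1 <= i < k & s = p i)).
- by rewrite dvdn1 => /eqP s1; rewrite s1 in s_prime.
- by move=> x y IHx IHy; rewrite Euclid_dvdM // => /orP[/IHx | /IHy].
move=> i /andP[ik _]; rewrite Euclid_dvdX // => /andP[s_dvd _]; exists i => //.
case/andP: ik => i_ge1 ik; apply/eqP; rewrite -dvdn_prime2 // p_prime // i_ge1.
exact: leq_trans (ltnW ik) k_le.
Qed.

Lemma pprod_leq_totient k : 0 < k <= r -> pprod k <= k * totient (pprod k).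
Proof.
elim: k => // k IHk /andP[_ k_le]; case: k IHk k_le => [|k] IHk k_le.
  by rewrite /pprod big_geq.
rewrite /pprod big_nat_recr //= -/(pprod k.+1).
have k_le' := ltnW k_le.
by apply: totient_mul_pfactor_geq; rewrite ?p_prime ?index_ltn_p ?coprime_pprod ?IHk.
Qed.

Hypothesis alpha_gt0 : forall i, 1 <= i <= r -> 0 < alpha i.

Lemma pprod_gt1 k : 1 < k <= r -> 1 < pprod k.
Proof.
case/andP=> k_gt1 k_le; have r_ge1 : 1 <= r := ltnW (leq_trans k_gt1 k_le).
have p1_prime : prime (p 1) by rewrite p_prime.
have pprod_gt0 : 0 < pprod k.
  rewrite /pprod big_nat_cond; apply: prodn_cond_gt0 => i /andP[/andP[i_ge1 ik] _].
  by rewrite expn_gt0 prime_gt0 // p_prime // i_ge1 (leq_trans (ltnW ik)).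
have p1_dvd : p 1 %| pprod k.
  by rewrite /pprod big_ltn // dvdn_mulr // dvdn_exp ?alpha_gt0.
exact: leq_trans (prime_gt1 p1_prime) (dvdn_leq pprod_gt0 p1_dvd).
Qed.

End IncreasingPrimes.

Theorem corollary1p4 (n r : nat) (p alpha : nat -> nat) :
  2 <= r ->
  (forall i, 1 <= i <= r -> prime (p i)) ->
  (forall i, 1 <= i <= r -> 0 < alpha i) ->
  (forall i, 1 <= i < r -> p i < p i.+1) ->
  n = \prod_(1 <= i < r.+1) p i ^ alpha i ->
  ((r.+1 <= p 1 /\ r * p r.-1 < p r) \/
   (forall i, 1 <= i < r -> r * p i < p i.+1)) ->
  pg_min_deg n = pg_deg n (p r ^ alpha r).
Proof.
move=> r_ge2 p_prime alpha_gt0 p_incr n_eq hyp.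
have r_gt0 : 0 < r := ltnW r_ge2.
have pr_prime : prime (p r) by apply: p_prime; rewrite r_gt0 leqnn.
have rp_lt : r * p r.-1 < p r.
  case: hyp => [[_ //] | incr]; have := incr r.-1; rewrite prednK //; apply; lia.
have n_eq' : n = pprod p alpha r * p r ^ alpha r by rewrite n_eq big_nat_recr.
have m_gt1 : 1 < pprod p alpha r by apply: (pprod_gt1 p_prime alpha_gt0); rewrite r_ge2 leqnn.
apply: pg_min_degE => [|b b_lt]; first by rewrite n_eq' ltn_Pmull // expn_gt0 prime_gt0.
have ar_gt0 : 0 < alpha r by apply: alpha_gt0; rewrite r_gt0 leqnn.
have m_le : pprod p alpha r <= r * totient (pprod p alpha r).
  by apply: (pprod_leq_totient _ p_prime p_incr); rewrite r_gt0 leqnn.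
have cop := coprime_pprod alpha p_prime p_incr (leqnn r).
apply: (pg_deg_pfactor_min pr_prime ar_gt0 m_gt1 cop n_eq' m_le) => // s s_prime.
move=> /(prime_dvd_pprod p_prime (leqnn r) s_prime) [i i_range ->].
by apply: leq_ltn_trans rp_lt; rewrite leq_mul2l p_leq_pred ?orbT.
Qed.
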